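(* Let $n\ge 2$. There is no finite subset $Y\subseteq\mathbb{S}^{n-1}$ which is a spherical design of harmonic index $\{8,4\}$ and has \[|Y|=\frac{(n+1)(n+2)(n+5)(n+6)}{252},\] i.e. there exists no tight spherical design of harmonic index $\{8,4\}$ on $\mathbb{S}^{n-1}$.
   Context: $\mathbb{S}^{n-1}$ is the unit sphere in $\mathbb{R}^n$. For $T\subseteq\mathbb{N}$, a finite $Y\subseteq\mathbb{S}^{n-1}$ is a spherical design of harmonic index $T$ if $\sum_{\mathbf{x}\in Y}f(\mathbf{x})=0$ for every real homogeneous harmonic polynomial $f$ in $n$ variables whose degree lies in $T$. With $Q_{n,k}$ the Gegenbauer polynomials (orthogonal on $[-1,1]$ for the weight $(1-x^2)^{(n-3)/2}$, $Q_{n,k}(1)=\binom{n+k-1}{n-1}-\binom{n+k-3}{n-1}$), the polynomial $L(x)=Q_{n,8}(x)+f_4Q_{n,4}(x)$ with $f_4=\frac{(n+4)(n+5)(n+14)}{60(n+12)}$ has the form $a(x^2-\alpha^2)^2(x^2-\beta^2)^2-c_{n,T}$ with $a>0$, $\alpha^2,\beta^2=\frac{7(n+8)\pm2\sqrt{7(n+5)(n+8)}}{(n+8)(n+12)}$, and $c_{n,T}=\frac{n(n+1)(n+4)(n+5)(n+10)(n+14)}{160(n+8)(n+12)}$; it yields the lower bound $|Y|\ge b_{n,T}=\frac{(n+1)(n+2)(n+5)(n+6)}{252}$ for designs of harmonic index $\{8,4\}$, and a design attaining it is called tight. *)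

From HB Require Import structures.
From mathcomp Require Import all_boot all_order all_algebra.
From mathcomp Require Import reals.
From mathcomp Require Import mpoly.
Set Implicit Arguments. Unset Strict Implicit. Unset Printing Implicit Defensive.
Import Order.TTheory GRing.Theory Num.Theory.
Local Open Scope ring_scope.

(* Points of R^n are row vectors 'rV[R]_n; a polynomial in n variables is
   evaluated at x via the coordinate function (fun i => x ord0 i). *)

Definition on_sphere (R : realType) (n : nat) (x : 'rV[R]_n) : bool :=
  \sum_(i < n) x ord0 i ^+ 2 == 1.

Definition laplacian (R : realType) (n : nat) (p : {mpoly R[n]}) : {mpoly R[n]} :=
  \sum_(i < n) mderiv i (mderiv i p).

Definition harmonic_homog (R : realType) (n k : nat) (p : {mpoly R[n]}) : Prop :=
  p \is k.-homog /\ laplacian p = 0.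

Definition harmonic_index_design (R : realType) (n : nat) (T : pred nat)
    (Y : seq 'rV[R]_n) : Prop :=
  uniq Y /\ all (@on_sphere R n) Y /\
  forall (k : nat) (f : {mpoly R[n]}), T k -> harmonic_homog k f ->
    \sum_(x <- Y) f.@[fun i => x ord0 i] = 0.

(* Fix y in Y.  The zonal harmonics of degrees 8 and 4 centred at y give
   [sum_x Q8 <y,x> = sum_x Q4 <y,x> = 0], and [Q8 + f Q4 = ann (t^2)^2 - c] with
   [ann s = (s - alpha^2)(s - beta^2)].  Hence [sum_x ann (<y,x>^2)^2 = c |Y|], which for a
   tight design is the diagonal term [ann 1 ^2] alone: every other inner product satisfies
   [<y,x>^2 = alpha^2] or [beta^2].  There [Q4] is affine in [2 t^2 - alpha^2 - beta^2 = +/- sqrt D],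
   so summing the degree-4 identity over all pairs yields an integer [K] with
   [2^7 3^4 7^3 (n - 2) K = +/- P(n) sqrt (7 (n + 5) (n + 8))].  Thus [7 (n + 5)(n + 8) = m^2], and
   reducing modulo [n - 2] shows that [n - 2] divides [2^8 3^3 5 7^5]; a finite search over
   these divisors finds no solution. *)

From Stdlib Require Import ZArith Lia.
From HB Require Import structures.
From mathcomp Require Import all_boot all_order all_algebra.
From mathcomp Require Import reals mpoly.
From mathcomp Require Import ring lra zify.
Import Order.TTheory GRing.Theory Num.Theory.
Set Implicit Arguments. Unset Strict Implicit. Unset Printing Implicit Defensive.

Section TightDiophantine.
Local Open Scope Z_scope.

Definition tight_polyZ (d : Z) : Z :=
  (d + 3) * (d + 4) * (d + 7) * (d + 8) * (d + 1) * (19 * d^3 + 197 * d^2 + 504 * d + 1764).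

Definition tight_solvable (d : Z) : bool :=
  let w := 7 * (d + 7) * (d + 10) in
  let r := Z.sqrt w in
  (r * r =? w) && (r * tight_polyZ d mod (3556224 * d) =? 0).

(* Modulo [d], [tight_polyZ d = 1185408] and [7 (d + 7) (d + 10) = 490]. *)
Definition tight_bound : Z := 1185408 * 490.

Definition divisor_pair_unsolvable (x : Z) : bool :=
  if tight_bound mod x =? 0
  then ~~ tight_solvable x && ~~ tight_solvable (tight_bound / x) else true.

Fixpoint downto (k : nat) (z : Z) : seq Z :=
  if k is k'.+1 then z :: downto k' (z - 1) else [::].

Lemma all_downto (p : pred Z) k z : all p (downto k z) ->
  forall x, z - Z.of_nat k < x <= z -> p x.
Proof.
elim: k z => [|k IHk] z /=; first by lia.
move=> /andP [pz pk] x x_bnd; have [-> //|x_ne] := Z.eq_dec x z.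
by apply: (IHk _ pk); lia.
Qed.

(* [24101 ^ 2 > tight_bound], so a divisor or its cofactor is at most 24101. *)
Lemma divisor_pairs_unsolvable :
  all divisor_pair_unsolvable (downto (Z.to_nat 24101) 24101).
Proof. by vm_compute. Qed.

Lemma divisor_unsolvable d : 0 < d -> (d | tight_bound) -> tight_solvable d = false.
Proof.
move=> d_gt0 [e de].
have e_gt0 : 0 < e by unfold tight_bound in de; nia.
have pair_ok x : 0 < x <= 24101 -> divisor_pair_unsolvable x.
  by move=> x_bnd; apply: (all_downto divisor_pairs_unsolvable); lia.
have [d_small | d_large] := Z.le_gt_cases d 24101.
  move: (pair_ok d (conj d_gt0 d_small)); rewrite /divisor_pair_unsolvable.
  by rewrite de Z_mod_mult Z.eqb_refl /= => /andP [/negbTE].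
have e_small : e <= 24101 by unfold tight_bound in de; nia.
move: (pair_ok e (conj e_gt0 e_small)); rewrite /divisor_pair_unsolvable.
rewrite de Z.mul_comm Z_mod_mult Z.eqb_refl Z.div_mul /=; last by lia.
by move=> /andP [_ /negbTE].
Qed.

Lemma tight_diophantineZ d m k : 0 < d -> 0 <= m -> m * m = 7 * (d + 7) * (d + 10) ->
  3556224 * d * k = m * tight_polyZ d -> False.
Proof.
move=> d_gt0 m_ge0 m_sq eq_dk.
set w := 2533104 + 2073540 * d + 977296 * d^2 + 309253 * d^3 + 65926 * d^4
  + 8740 * d^5 + 634 * d^6 + 19 * d^7.
have poly_mod_d : tight_polyZ d = 1185408 + d * w by rewrite /tight_polyZ /w; ring.
have d_dvd_m : (d | 1185408 * m).
  exists (3556224 * k - m * w); rewrite poly_mod_d in eq_dk; nia.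
have gcd_dvd : (Z.gcd m d | 490).
  have -> : 490 = m * m - d * (7 * (d + 17)) by nia.
  apply: Z.divide_sub_r; apply: Z.divide_mul_l.
    exact: Z.gcd_divide_l.
  exact: Z.gcd_divide_r.
have d_dvd_bound : (d | tight_bound).
  apply: (Z.divide_trans _ (1185408 * Z.gcd m d)); last exact: Z.mul_divide_mono_l.
  have -> : 1185408 * Z.gcd m d = Z.gcd (1185408 * m) (1185408 * d).
    by rewrite Z.gcd_mul_mono_l.
  apply: Z.gcd_greatest => //.
  by exists 1185408; ring.
move: (divisor_unsolvable d_gt0 d_dvd_bound); rewrite /tight_solvable -m_sq.
rewrite Z.sqrt_square // Z.eqb_refl -eq_dk.
by rewrite (Z.mul_comm _ k) Z_mod_mult.
Qed.

End TightDiophantine.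

(* [tight_poly d] is [tight_polyZ d], and [tight_polyR] below at [n = d + 2]. *)
Definition tight_poly (d : nat) : nat :=
  (d + 3) * (d + 4) * (d + 7) * (d + 8) * (d + 1) * (19 * d ^ 3 + 197 * d ^ 2 + 504 * d + 1764).

Lemma tight_diophantine (d k : nat) :
  (2 ^ 7 * 3 ^ 4 * 7 ^ 3 * d * k) ^ 2 = tight_poly d ^ 2 * (7 * (d + 7) * (d + 10)) -> False.
Proof.
move=> eq_dk; have [d0 | d_gt0] := posnP d.
  by move: eq_dk; rewrite d0 /tight_poly; lia.
have poly_gt0 : 0 < tight_poly d.
  by rewrite /tight_poly !muln_gt0; repeat (apply/andP; split); lia.
set x := 2 ^ 7 * 3 ^ 4 * 7 ^ 3 * d * k in eq_dk.
have poly_dvd : tight_poly d %| x by rewrite -(@dvdn_pexp2r _ _ 2) // eq_dk dvdn_mulr.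
set m := x %/ tight_poly d.
have x_eq : x = m * tight_poly d by rewrite divnK.
have m_sq : m ^ 2 = 7 * (d + 7) * (d + 10).
  apply/eqP; rewrite -(@eqn_pmul2r (tight_poly d ^ 2)) ?expn_gt0 ?poly_gt0 //.
  by rewrite -expnMn -x_eq eq_dk mulnC.
apply: (@tight_diophantineZ (Z.of_nat d) (Z.of_nat m) (Z.of_nat k)); try lia.
move: x_eq; rewrite /x /tight_poly /tight_polyZ; lia.
Qed.

Local Open Scope ring_scope.

Section Laplacian.
Variables (R : realType) (n : nat).
Local Notation P := {mpoly R[n]}.

Lemma mderiv_exp i (p : P) a : mderiv i (p ^+ a) = (p ^+ a.-1 * mderiv i p) *+ a.
Proof.
elim: a => [|a IHa]; first by rewrite expr0 -mpolyC1 mderivC mulr0n.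
rewrite exprS mderivM IHa; case: a IHa => [|a] _ /=.
  by rewrite expr0 !mulr1 mulr0n mulr0 addr0 mul1r.
rewrite !exprS; ring.
Qed.

Lemma mderiv_var i j : mderiv i ('X_j : P) = (i == j)%:R%:MP.
Proof.
rewrite mderivX mnm1E; case: (eqVneq j i) => [->|_]; last by rewrite scale0r mpolyC0.
have -> : (U_(i) - U_(i))%MM = 0%MM by apply/mnmP => k; rewrite !mnmE subnn.
by rewrite mpolyX0 -mul_mpolyC mulr1.
Qed.

Lemma laplacianD (p q : P) : laplacian (p + q) = laplacian p + laplacian q.
Proof. by rewrite /laplacian -big_split; apply: eq_bigr => i _; rewrite !mderivD. Qed.

Lemma laplacianZ c (p : P) : laplacian (c *: p) = c *: laplacian p.
Proof. by rewrite /laplacian scaler_sumr; apply: eq_bigr => i _; rewrite !mderivZ. Qed.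

Lemma laplacianM (p q : P) : laplacian (p * q) =
  laplacian p * q + p * laplacian q + (\sum_(i < n) mderiv i p * mderiv i q) *+ 2.
Proof.
rewrite /laplacian mulr_suml mulr_sumr -sumrMnl -!big_split /=.
by apply: eq_bigr => i _; rewrite !mderivM mderivD !mderivM; ring.
Qed.

Definition sqnormX : P := \sum_(i < n) 'X_i ^+ 2.

Lemma mderiv_sqnormX i : mderiv i sqnormX = 'X_i *+ 2.
Proof.
rewrite /sqnormX raddf_sum (bigD1 i) //= big1 => [|j ji].
  by rewrite addr0 mderiv_exp mderiv_var eqxx mpolyC1 mulr1 expr1.
by rewrite mderiv_exp mderiv_var eq_sym (negbTE ji) mpolyC0 mulr0 mul0rn.
Qed.

Lemma laplacian_sqnormX_exp b :
  laplacian (sqnormX ^+ b) = sqnormX ^+ b.-1 *+ (4 * b.-1 * b + 2 * n * b).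
Proof.
have sum_sq : \sum_(i < n) 'X_i * 'X_i = sqnormX.
  by apply: eq_bigr => i _; rewrite expr2.
rewrite /laplacian.
transitivity (\sum_(i < n) ((sqnormX ^+ b.-2 * ('X_i * 'X_i)) *+ (4 * b.-1 * b)
                          + sqnormX ^+ b.-1 *+ (2 * b))).
  apply: eq_bigr => i _; rewrite !mderiv_exp mderiv_sqnormX mderivMn mderivM mderivMn.
  rewrite mderiv_var eqxx mpolyC1 mderiv_exp mderiv_sqnormX.
  by case: b => [|[|b]] /=; rewrite ?mulr0n ?mul0rn ?mul0n ?muln0 //=; ring.
rewrite big_split /= !sumrMnl -mulr_sumr sum_sq sumr_const card_ord -mulrnA.
case: b => [|[|b]] /=; first by rewrite !muln0 !mulr0n addr0.
  by ring.
by rewrite -exprSr -mulrnDr; congr (_ *+ _); ring.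
Qed.

Lemma dhomog_var i : ('X_i : P) \is 1.-homog.
Proof. by rewrite dhomogX /= mdeg1. Qed.

Lemma dhomog_sqnormX : sqnormX \is 2.-homog.
Proof. by apply: rpred_sum => i _; apply: dhomogMn (dhomog_var i). Qed.

Lemma meval_sqnormX (x : 'I_n -> R) : sqnormX.@[x] = \sum_(i < n) x i ^+ 2.
Proof. by rewrite raddf_sum; apply: eq_bigr => i _; rewrite /= rmorphXn /= mevalXU. Qed.

Variable v : 'I_n -> R.

Definition dotX : P := \sum_(i < n) v i *: 'X_i.

Lemma mderiv_dotX i : mderiv i dotX = (v i)%:MP.
Proof.
rewrite /dotX raddf_sum (bigD1 i) //= big1 => [|j ji].
  by rewrite addr0 mderivZ mderiv_var eqxx -mul_mpolyC mulr1.
by rewrite mderivZ mderiv_var eq_sym (negbTE ji) mpolyC0 scaler0.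
Qed.

Lemma dhomog_dotX : dotX \is 1.-homog.
Proof. by apply: rpred_sum => i _; apply/rpredZ/dhomog_var. Qed.

Lemma meval_dotX (x : 'I_n -> R) : dotX.@[x] = \sum_(i < n) v i * x i.
Proof. by rewrite raddf_sum; apply: eq_bigr => i _; rewrite /= mevalZ mevalXU. Qed.

Lemma dhomog_zonal a b : dotX ^+ a * sqnormX ^+ b \is (a + 2 * b)%N.-homog.
Proof.
by have := dhomogM (dhomogMn a dhomog_dotX) (dhomogMn b dhomog_sqnormX); rewrite mul1n mulnC.
Qed.

Lemma sum_mderiv_dotX_sqnormX a b :
  \sum_(i < n) mderiv i (dotX ^+ a) * mderiv i (sqnormX ^+ b) =
  dotX ^+ a * sqnormX ^+ b.-1 *+ (2 * a * b).
Proof.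
transitivity (\sum_(i < n) (dotX ^+ a.-1 * sqnormX ^+ b.-1 *+ (2 * a * b)) * ((v i)%:MP * 'X_i)).
  by apply: eq_bigr => i _; rewrite !mderiv_exp mderiv_dotX mderiv_sqnormX; ring.
have dotX_eq : \sum_(i < n) (v i)%:MP * 'X_i = dotX.
  by apply: eq_bigr => i _; rewrite mul_mpolyC.
rewrite -mulr_sumr dotX_eq; case: a => [|a] /=; first by rewrite ?mul0n ?muln0 ?mulr0n ?mul0r.
by rewrite mulrnAl -mulrA (mulrC (sqnormX ^+ _)) mulrA -exprSr.
Qed.

Hypothesis v_unit : \sum_(i < n) v i ^+ 2 = 1.

Lemma laplacian_dotX_exp a : laplacian (dotX ^+ a) = dotX ^+ a.-2 *+ (a.-1 * a).
Proof.
rewrite /laplacian.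
transitivity (\sum_(i < n) (dotX ^+ a.-2 *+ (a.-1 * a)) * (v i ^+ 2)%:MP).
  apply: eq_bigr => i _; rewrite !mderiv_exp mderiv_dotX mderivMn mderivM mderivC.
  rewrite mulr0 addr0 mderiv_exp mderiv_dotX rmorphXn /=.
  by case: a => [|[|a]] /=; rewrite ?mulr0n ?mul0rn ?mul0n //; ring.
by rewrite -mulr_sumr -rmorph_sum v_unit /= mulr1.
Qed.

Lemma laplacian_zonal a b : laplacian (dotX ^+ a * sqnormX ^+ b) =
  dotX ^+ a.-2 * sqnormX ^+ b *+ (a.-1 * a) +
  dotX ^+ a * sqnormX ^+ b.-1 *+ (4 * b.-1 * b + 2 * n * b + 4 * a * b).
Proof.
by rewrite laplacianM laplacian_dotX_exp laplacian_sqnormX_exp sum_mderiv_dotX_sqnormX; ring.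
Qed.

Lemma meval_zonal a b (x : 'I_n -> R) : \sum_(i < n) x i ^+ 2 = 1 ->
  (dotX ^+ a * sqnormX ^+ b).@[x] = (\sum_(i < n) v i * x i) ^+ a.
Proof. by move=> x_unit; rewrite mevalM !rmorphXn /= meval_dotX meval_sqnormX x_unit expr1n mulr1. Qed.

End Laplacian.

Section ZonalHarmonics.
Variables (R : realType) (n : nat).
Local Notation nR := (n%:R : R).

(* [gegen8] and [gegen4] are the Gegenbauer polynomials [Q_{n,8}], [Q_{n,4}]
   rescaled to be monic. *)
Definition c80 : R := 105 / ((nR + 6) * (nR + 8) * (nR + 10) * (nR + 12)).
Definition c81 : R := - 420 / ((nR + 8) * (nR + 10) * (nR + 12)).
Definition c82 : R := 210 / ((nR + 10) * (nR + 12)).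
Definition c83 : R := - 28 / (nR + 12).
Definition c40 : R := 3 / ((nR + 2) * (nR + 4)).
Definition c41 : R := - 6 / (nR + 4).

Definition gegen8 (t : R) : R :=
  c80 + c81 * t ^+ 2 + c82 * t ^+ 4 + c83 * t ^+ 6 + t ^+ 8.
Definition gegen4 (t : R) : R := c40 + c41 * t ^+ 2 + t ^+ 4.

(* [ann s = (s - alpha^2) (s - beta^2)], with [alpha^2], [beta^2] the squared inner
   products allowed in a tight design. *)
Definition ann_e1 : R := 14 / (nR + 12).
Definition ann_e2 : R := 21 / ((nR + 8) * (nR + 12)).
Definition ann (s : R) : R := s ^+ 2 - ann_e1 * s + ann_e2.

Definition ann_f4 : R := ann_e1 ^+ 2 + 2 * ann_e2 - c82.
Definition ann_c : R := ann_e2 ^+ 2 - c80 - ann_f4 * c40.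

Lemma gegen_annihilator t : gegen8 t + ann_f4 * gegen4 t = ann (t ^+ 2) ^+ 2 - ann_c.
Proof.
rewrite /gegen8 /gegen4 /ann /ann_c /ann_f4 /ann_e1 /ann_e2 /c80 /c81 /c82 /c83 /c40 /c41.
by have n_ge0 : 0 <= nR := ler0n _ _; field; lra.
Qed.

Lemma ann1_sq : ann 1 ^+ 2 = ann_c * ((nR + 1) * (nR + 2) * (nR + 5) * (nR + 6) / 252).
Proof.
rewrite /ann /ann_c /ann_f4 /ann_e1 /ann_e2 /c80 /c82 /c40.
by have n_ge0 : 0 <= nR := ler0n _ _; field; lra.
Qed.

Definition ann_disc : R := ann_e1 ^+ 2 - 4 * ann_e2.

Lemma ann_disc_ge0 : 0 <= ann_disc.
Proof.
have n_ge0 : 0 <= nR := ler0n _ _.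
have -> : ann_disc = 112 * (nR + 5) / ((nR + 8) * (nR + 12) ^+ 2).
  by rewrite /ann_disc /ann_e1 /ann_e2; field; lra.
by apply: divr_ge0; [lra | apply: mulr_ge0; [lra | apply: exprn_ge0; lra]].
Qed.

Lemma ann_root_sq s : ann s = 0 -> (2 * s - ann_e1) ^+ 2 = ann_disc.
Proof.
move=> ann_s; apply/eqP; rewrite -subr_eq0; apply/eqP.
by rewrite -[RHS](mulr0 4) -ann_s /ann /ann_disc; ring.
Qed.

Definition gegen4_rem_slope : R := (ann_e1 + c41) / 2.
Definition gegen4_rem_const : R := (ann_e1 + c41) * ann_e1 / 2 + c40 - ann_e2.

Lemma gegen4_ann_root t : ann (t ^+ 2) = 0 ->
  gegen4 t = gegen4_rem_slope * (2 * t ^+ 2 - ann_e1) + gegen4_rem_const.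
Proof.
move=> ann_t; rewrite -[LHS]subr0 -ann_t /gegen4 /ann /gegen4_rem_slope /gegen4_rem_const.
by rewrite (_ : 4%N = (2 * 2)%N) // exprM; field.
Qed.

Definition tight_polyR : R := (nR + 1) * (nR + 2) * (nR + 5) * (nR + 6) * (nR - 1)
  * (19 * nR ^+ 3 + 83 * nR ^+ 2 - 56 * nR + 1392).

Lemma tight_count_identity (b K : R) :
  b = (nR + 1) * (nR + 2) * (nR + 5) * (nR + 6) / 252 ->
  b * gegen4 1 + gegen4_rem_slope * Num.sqrt ann_disc * K
    + gegen4_rem_const * (b - 1) * b = 0 ->
  (2 ^+ 7 * 3 ^+ 4 * 7 ^+ 3 * (nR - 2) * K) ^+ 2 =
  tight_polyR ^+ 2 * (7 * (nR + 5) * (nR + 8)).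
Proof.
move=> b_eq count_eq.
have n_ge0 : 0 <= nR := ler0n _ _.
have sq_eq : gegen4_rem_slope ^+ 2 * ann_disc * K ^+ 2 =
    (b * gegen4 1 + gegen4_rem_const * (b - 1) * b) ^+ 2.
  have -> : b * gegen4 1 + gegen4_rem_const * (b - 1) * b =
      - (gegen4_rem_slope * Num.sqrt ann_disc * K).
    by apply/eqP; rewrite -subr_eq0 opprK -addrAC count_eq.
  by rewrite -[in LHS](sqr_sqrtr ann_disc_ge0); ring.
(* [gegen4_rem_slope ^+ 2 * ann_disc = 1792 (n - 2)^2 (n + 5) / ((n + 12)^4 (n + 4)^2 (n + 8))] *)
transitivity ((2 ^+ 7 * 3 ^+ 4 * 7 ^+ 3) ^+ 2 * (nR + 12) ^+ 4 * (nR + 4) ^+ 2 * (nR + 8)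
    / (1792 * (nR + 5)) * (gegen4_rem_slope ^+ 2 * ann_disc * K ^+ 2)).
  by rewrite /gegen4_rem_slope /ann_disc /ann_e1 /ann_e2 /c41; field; lra.
rewrite sq_eq b_eq /gegen4 /gegen4_rem_const /tight_polyR /ann_e1 /ann_e2 /c40 /c41.
by field; lra.
Qed.

Section Zonal.
Variable v : 'I_n -> R.
Local Notation U := (dotX v).
Local Notation S := (sqnormX R n).

Definition zonal8 : {mpoly R[n]} :=
  c80 *: (U ^+ 0 * S ^+ 4) + c81 *: (U ^+ 2 * S ^+ 3) + c82 *: (U ^+ 4 * S ^+ 2)
  + c83 *: (U ^+ 6 * S ^+ 1) + U ^+ 8 * S ^+ 0.
Definition zonal4 : {mpoly R[n]} :=
  c40 *: (U ^+ 0 * S ^+ 2) + c41 *: (U ^+ 2 * S ^+ 1) + U ^+ 4 * S ^+ 0.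

Lemma dhomog_zonal8 : zonal8 \is 8.-homog.
Proof. by rewrite /zonal8; repeat apply: rpredD; try apply: rpredZ; apply: dhomog_zonal. Qed.

Lemma dhomog_zonal4 : zonal4 \is 4.-homog.
Proof. by rewrite /zonal4; repeat apply: rpredD; try apply: rpredZ; apply: dhomog_zonal. Qed.

Lemma meval_zonal8 (x : 'I_n -> R) : \sum_(i < n) x i ^+ 2 = 1 ->
  zonal8.@[x] = gegen8 (\sum_(i < n) v i * x i).
Proof. by move=> x_unit; rewrite /zonal8 !mevalD !mevalZ !meval_zonal // expr0 mulr1. Qed.

Lemma meval_zonal4 (x : 'I_n -> R) : \sum_(i < n) x i ^+ 2 = 1 ->
  zonal4.@[x] = gegen4 (\sum_(i < n) v i * x i).
Proof. by move=> x_unit; rewrite /zonal4 !mevalD !mevalZ !meval_zonal // expr0 mulr1. Qed.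

Hypothesis v_unit : \sum_(i < n) v i ^+ 2 = 1.

Lemma laplacian_zonal8 : laplacian zonal8 = 0.
Proof.
rewrite /zonal8 !laplacianD !laplacianZ !laplacian_zonal //= -!mul_mpolyC.
transitivity ((c80 * (48 + 8 * nR) + c81 * 2)%:MP * S ^+ 3
   + (c81 * (48 + 6 * nR) + c82 * 12)%:MP * (U ^+ 2 * S ^+ 2)
   + (c82 * (40 + 4 * nR) + c83 * 30)%:MP * (U ^+ 4 * S)
   + (c83 * (24 + 2 * nR) + 56)%:MP * U ^+ 6); first by ring.
have n_ge0 : 0 <= nR := ler0n _ _.
have -> : c80 * (48 + 8 * nR) + c81 * 2 = 0 by rewrite /c80 /c81; field; lra.
have -> : c81 * (48 + 6 * nR) + c82 * 12 = 0 by rewrite /c81 /c82; field; lra.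
have -> : c82 * (40 + 4 * nR) + c83 * 30 = 0 by rewrite /c82 /c83; field; lra.
have -> : c83 * (24 + 2 * nR) + 56 = 0 by rewrite /c83; field; lra.
by rewrite !mpolyC0 !mul0r !addr0.
Qed.

Lemma laplacian_zonal4 : laplacian zonal4 = 0.
Proof.
rewrite /zonal4 !laplacianD !laplacianZ !laplacian_zonal //= -!mul_mpolyC.
transitivity ((c40 * (8 + 4 * nR) + c41 * 2)%:MP * S
   + (c41 * (8 + 2 * nR) + 12)%:MP * U ^+ 2); first by ring.
have n_ge0 : 0 <= nR := ler0n _ _.
have -> : c40 * (8 + 4 * nR) + c41 * 2 = 0 by rewrite /c40 /c41; field; lra.
have -> : c41 * (8 + 2 * nR) + 12 = 0 by rewrite /c41; field; lra.
by rewrite !mpolyC0 !mul0r addr0.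
Qed.

End Zonal.

End ZonalHarmonics.

Lemma psumr_eq_term_eq0 (R : numDomainType) (T : eqType) (s : seq T) (F : T -> R) y x :
  uniq s -> y \in s -> x \in s -> x != y -> (forall z, 0 <= F z) ->
  \sum_(z <- s) F z = F y -> F x = 0.
Proof.
move=> s_uniq ys xs xy F_ge0; rewrite (bigD1_seq y) //= -[RHS]addr0 => /addrI /eqP.
rewrite psumr_eq0 => [/allP/(_ x xs)|z _]; last exact: F_ge0.
by rewrite xy => /eqP.
Qed.

Lemma sumr_const_seq (R : pzSemiRingType) (T : Type) (s : seq T) (c : R) :
  \sum_(x <- s) c = c * (size s)%:R.
Proof. by rewrite big_const_seq count_predT iter_addr_0 mulr_natr. Qed.

Definition dotv (R : realType) (n : nat) (y x : 'rV[R]_n) : R :=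
  \sum_(i < n) y ord0 i * x ord0 i.

Section TightDesign.
Variables (R : realType) (n : nat) (Y : seq 'rV[R]_n).
Local Notation nR := (n%:R : R).
Local Notation b := ((size Y)%:R : R).
Hypothesis Y_design : harmonic_index_design (pred2 8%N 4%N) Y.
Hypothesis Y_tight : b = (nR + 1) * (nR + 2) * (nR + 5) * (nR + 6) / 252.

Let Y_uniq : uniq Y := Y_design.1.

Lemma design_on_sphere x : x \in Y -> \sum_(i < n) x ord0 i ^+ 2 = 1.
Proof. by move=> xY; apply/eqP; have [_ [/allP /(_ x xY)]] := Y_design. Qed.

Lemma dotvv y : y \in Y -> dotv y y = 1.
Proof. by move=> yY; rewrite -(design_on_sphere yY); apply: eq_bigr => i _; rewrite expr2. Qed.

Lemma design_gegen8_sum y : y \in Y -> \sum_(x <- Y) gegen8 n (dotv y x) = 0.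
Proof.
move=> yY; have [_ [_ design]] := Y_design.
have zonal_harm : harmonic_homog 8 (zonal8 (fun i => y ord0 i)).
  exact: conj (dhomog_zonal8 _) (laplacian_zonal8 (design_on_sphere yY)).
apply: etrans (design 8%N _ isT zonal_harm); apply: eq_big_seq => x xY.
by rewrite meval_zonal8 // design_on_sphere.
Qed.

Lemma design_gegen4_sum y : y \in Y -> \sum_(x <- Y) gegen4 n (dotv y x) = 0.
Proof.
move=> yY; have [_ [_ design]] := Y_design.
have zonal_harm : harmonic_homog 4 (zonal4 (fun i => y ord0 i)).
  exact: conj (dhomog_zonal4 _) (laplacian_zonal4 (design_on_sphere yY)).
apply: etrans (design 4%N _ isT zonal_harm); apply: eq_big_seq => x xY.
by rewrite meval_zonal4 // design_on_sphere.
Qed.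

Lemma tight_ann_offdiag y x : y \in Y -> x \in Y -> x != y -> ann n (dotv y x ^+ 2) = 0.
Proof.
move=> yY xY xy; apply/eqP; rewrite -sqrf_eq0; apply/eqP.
apply: (psumr_eq_term_eq0 (F := fun z => ann n (dotv y z ^+ 2) ^+ 2) Y_uniq yY xY xy).
  by move=> z; exact: sqr_ge0.
transitivity (\sum_(z <- Y) (gegen8 n (dotv y z) + ann_f4 R n * gegen4 n (dotv y z) + ann_c R n)).
  by apply: eq_bigr => z _; rewrite gegen_annihilator subrK.
rewrite 2!big_split /= -mulr_sumr design_gegen8_sum // design_gegen4_sum //.
by rewrite sumr_const_seq dotvv // expr1n ann1_sq -Y_tight mulr0 !add0r.
Qed.

Definition pair_sign (y x : 'rV[R]_n) : int :=
  if 0 <= 2 * dotv y x ^+ 2 - ann_e1 R n then 1 else -1.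

Lemma tight_pair_dev y x : y \in Y -> x \in Y -> x != y ->
  2 * dotv y x ^+ 2 - ann_e1 R n = Num.sqrt (ann_disc R n) * (pair_sign y x)%:~R.
Proof.
move=> yY xY xy; rewrite -(ann_root_sq (tight_ann_offdiag yY xY xy)) sqrtr_sqr /pair_sign.
case: ifP => [/ger0_norm -> | /negbT]; first by rewrite rmorph1 mulr1.
by rewrite -ltNge => /ltr0_norm ->; rewrite rmorphN1 mulrN1 opprK.
Qed.

Definition sign_count : int := \sum_(y <- Y) \sum_(x <- Y | x != y) pair_sign y x.

Lemma tight_sign_count :
  b * gegen4 n 1 + gegen4_rem_slope R n * Num.sqrt (ann_disc R n) * sign_count%:~R
    + gegen4_rem_const R n * (b - 1) * b = 0.
Proof.
set A := gegen4_rem_slope R n * Num.sqrt (ann_disc R n).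
have row_sum y : y \in Y -> gegen4 n 1 + A * (\sum_(x <- Y | x != y) pair_sign y x)%:~R
    + gegen4_rem_const R n * (b - 1) = 0.
  move=> yY; rewrite -(design_gegen4_sum yY) (bigD1_seq y) //= dotvv // -addrA.
  congr (_ + _); rewrite rmorph_sum mulr_sumr.
  have rest_const : \sum_(x <- Y | x != y) gegen4_rem_const R n = gegen4_rem_const R n * (b - 1).
    have := sumr_const_seq Y (gegen4_rem_const R n).
    by rewrite (bigD1_seq y) //= => /(canRL (addKr _)) ->; ring.
  rewrite -rest_const -big_split /= big_seq_cond [RHS]big_seq_cond.
  apply: eq_bigr => x /andP [xY xy].
  by rewrite (gegen4_ann_root (tight_ann_offdiag yY xY xy)) tight_pair_dev // /A; ring.
transitivity (\sum_(y <- Y) (gegen4 n 1 + A * (\sum_(x <- Y | x != y) pair_sign y x)%:~R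
    + gegen4_rem_const R n * (b - 1))); last by rewrite big_seq big1 // => y; exact: row_sum.
rewrite 2!big_split /= !sumr_const_seq -mulr_sumr /sign_count [in LHS]rmorph_sum.
by ring.
Qed.

Lemma tight_design_diophantine : (2 <= n)%N -> exists k : nat,
  ((2 ^ 7 * 3 ^ 4 * 7 ^ 3 * (n - 2) * k) ^ 2 =
   tight_poly (n - 2) ^ 2 * (7 * (n - 2 + 7) * (n - 2 + 10)))%N.
Proof.
move=> n_ge2; exists (absz sign_count); apply/eqP; rewrite -(eqr_nat R); apply/eqP.
have nR_eq : nR = (n - 2)%:R + 2 by rewrite -natrD subnK.
have k_sq : ((absz sign_count)%:R : R) ^+ 2 = sign_count%:~R ^+ 2.
  by rewrite natr_absz intr_norm real_normK // num_real.
transitivity ((2 ^+ 7 * 3 ^+ 4 * 7 ^+ 3 * (nR - 2) * sign_count%:~R) ^+ 2).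
  by rewrite exprMn -k_sq nR_eq; ring.
rewrite (tight_count_identity Y_tight tight_sign_count) /tight_polyR /tight_poly nR_eq.
by ring.
Qed.

End TightDesign.

Theorem theorem6p5 (R : realType) (n : nat) : (2 <= n)%N ->
  ~ exists Y : seq 'rV[R]_n,
      harmonic_index_design (pred2 8%N 4%N) Y /\
      (size Y)%:R = ((n + 1) * (n + 2) * (n + 5) * (n + 6))%:R / 252 :> R.
Proof.
move=> n_ge2 [Y [Y_design Y_size]].
have Y_tight : (size Y)%:R = ((n%:R : R) + 1) * (n%:R + 2) * (n%:R + 5) * (n%:R + 6) / 252.
  by rewrite Y_size; congr (_ / _); ring.
have [k k_eq] := tight_design_diophantine Y_design Y_tight n_ge2.
exact: tight_diophantine k_eq.
Qed.
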